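(* Let $\alpha_1,\alpha_2$ be the maps defined on gapset filtrations $F=(F_0,F_1,F_2)$ of depth at most $3$ (with $F_0=[1,m-1]$, $m$ the multiplicity) by $\alpha_1(F)=(F_0\sqcup\{m\},F_1,F_2)$ and $\alpha_2(F)=(F_0\sqcup\{m\},F_1\sqcup\{m\},F_2)$. Then the images of $\alpha_1$ and $\alpha_2$ are disjoint: there are no gapset filtrations $F,F'$ of depth at most $3$ with $\alpha_1(F)=\alpha_2(F')$.
   Context: A gapset is a finite set $G \subset \mathbb{N}_+$ such that for all $z \in G$, whenever $z=x+y$ with $x,y\in\mathbb{N}_+$, we have $x\in G$ or $y\in G$. Its multiplicity is the least $m\ge1$ with $m\notin G$, and its depth is $\lceil c/m\rceil$ where $c=\max G+1$ ($c=0$ if $G=\emptyset$). For $m\ge1$, an $m$-filtration is a sequence $(F_0,\dots,F_t)$ with $F_0=[1,m-1]\supseteq F_1\supseteq\dots\supseteq F_t$; it is a gapset filtration if $\bigcup_i(im+F_i)$ is a gapset, and its multiplicity and depth are those of that gapset. Gapset filtrations of depth at most $3$ are written as triples $(F_0,F_1,F_2)$, padding with empty sets if necessary. *)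

From mathcomp Require Import all_boot.
From mathcomp Require Import finmap.
Set Implicit Arguments. Unset Strict Implicit. Unset Printing Implicit Defensive.
Local Open Scope fset_scope.

Definition is_gapset (G : {fset nat}) : Prop :=
  0 \notin G /\
  forall z, z \in G -> forall x y, 0 < x -> 0 < y -> (x + y)%N = z -> x \in G \/ y \in G.

Definition interval1 (m : nat) : {fset nat} := [fset i | i in iota 1 m.-1].

Definition shiftf (k : nat) (F : {fset nat}) : {fset nat} := (fun x => (k + x)%N) @` F.

Definition filt_set (m : nat) (F0 F1 F2 : {fset nat}) : {fset nat} :=
  F0 `|` shiftf m F1 `|` shiftf (2 * m)%N F2.

(* (F0,F1,F2) is a gapset m-filtration (of length at most 3, i.e. depth <= 3,
   shorter filtrations padded with empty sets). *)
Definition gapset_filtration3 (m : nat) (F0 F1 F2 : {fset nat}) : Prop :=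
  1 <= m /\ F0 = interval1 m /\ F1 `<=` F0 /\ F2 `<=` F1 /\
  is_gapset (filt_set m F0 F1 F2).

From mathcomp Require Import all_boot.
From mathcomp Require Import finmap zify.
Set Implicit Arguments. Unset Strict Implicit. Unset Printing Implicit Defensive.
Local Open Scope fset_scope.

(* Both maps add the multiplicity m to F_0, which makes the common first
   component the interval [1, m]; so equal images force equal multiplicities.
   But then α_2 puts m into F_1, which for α_1 must stay inside [1, m-1]. *)

Lemma in_interval1 m x : (x \in interval1 m) = (0 < x < m).
Proof.
apply/imfsetP/idP => [[y /= y_in ->] | x_in]; last exists x => //=.
  by move: y_in; rewrite mem_iota; lia.
by rewrite mem_iota; lia.
Qed.

Lemma in_interval1U1 m x : 0 < m -> (x \in interval1 m `|` [fset m]) = (0 < x <= m).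
Proof.
move=> m_gt0; rewrite in_fsetU in_fset1 in_interval1 (leq_eqVlt x m).
by case: eqP => [-> | _]; rewrite ?m_gt0 ?orbT ?orbF.
Qed.

Lemma interval1U1_inj m m' :
  0 < m -> 0 < m' -> interval1 m `|` [fset m] = interval1 m' `|` [fset m'] -> m = m'.
Proof.
move=> m_gt0 m'_gt0 E; apply/eqP; rewrite eqn_leq.
have mem_eq x : (x \in interval1 m `|` [fset m]) = (x \in interval1 m' `|` [fset m']).
  by rewrite E.
have := mem_eq m; have := mem_eq m'; rewrite !in_interval1U1 // m_gt0 m'_gt0 !leqnn /=.
by move=> -> <-.
Qed.

Theorem mainTheorem12 :
  forall (m m' : nat) (F0 F1 F2 G0 G1 G2 : {fset nat}),
    gapset_filtration3 m F0 F1 F2 ->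
    gapset_filtration3 m' G0 G1 G2 ->
    ~ ((F0 `|` [fset m], F1, F2) = (G0 `|` [fset m'], G1 `|` [fset m'], G2)).
Proof.
move=> m m' F0 F1 F2 G0 G1 G2 [m_gt0 [-> [F1_sub _]]] [m'_gt0 [-> _]] [E0 E1 _].
have m'_eq := interval1U1_inj m_gt0 m'_gt0 E0; subst m'.
have /(fsubsetP F1_sub) : m \in F1 by rewrite E1 in_fsetU in_fset1 eqxx orbT.
by rewrite in_interval1 ltnn andbF.
Qed.
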